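(* For a weakly symmetric discrete memoryless channel $W$ with input alphabet $\mathbb{F}_q$, $$C_{KV}(W)\ge1-(q-1)Z(W),$$ where $Z(W)$ is the Bhattacharyya parameter of $W$.
   Context: A discrete memoryless channel with transition probabilities $W(y|x)$, $x\in\mathbb{F}_q$, $y\in\mathcal{Y}$, is weakly symmetric if $\mathcal{Y}$ admits a partition $Y_1\cup\dots\cup Y_r$ such that each submatrix $(W(y|x))_{x,y\in Y_i}$ has all rows permutations of each other and all columns permutations of each other. With input $X$ uniform on $\mathbb{F}_q$ and output $Y$, the APP vector of output $y$ is $\pi_y=(\mathrm{prob}(X=\alpha|Y=y))_\alpha$ and the Koetter–Vardy capacity is $C_{KV}(W)=\mathbb{E}(\sum_\alpha\pi_Y(\alpha)^2)$. The Bhattacharyya parameter is $Z(W)=\frac1{q(q-1)}\sum_{x\ne x'}\sum_{y\in\mathcal{Y}}\sqrt{W(y|x)W(y|x')}$. *)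

From HB Require Import structures.
From mathcomp Require Import all_boot all_order all_algebra all_field.
From mathcomp Require Import reals.
Set Implicit Arguments. Unset Strict Implicit. Unset Printing Implicit Defensive.
Import Order.TTheory GRing.Theory Num.Theory.
Local Open Scope ring_scope.

(* A DMC with input alphabet F (a finite field F_q) and finite output
   alphabet Y is a matrix W : F -> Y -> R, with  W x y = W(y|x). *)
Definition is_channel (R : realType) (F : finFieldType) (Y : finType)
  (W : F -> Y -> R) : Prop :=
  (forall x y, 0 <= W x y) /\ (forall x, \sum_(y : Y) W x y = 1).

Definition weakly_symmetric (R : realType) (F : finFieldType) (Y : finType)
  (W : F -> Y -> R) : Prop :=
  exists P : {set {set Y}},
    partition P [set: Y] /\
    forall B, B \in P ->
      (forall x x' : F,
         perm_eq [seq W x y | y <- enum B] [seq W x' y | y <- enum B]) /\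
      (forall y y', y \in B -> y' \in B ->
         perm_eq [seq W x y | x <- enum F] [seq W x y' | x <- enum F]).

Definition qF (R : realType) (F : finFieldType) : R := (#|F|)%:R.

Definition out_prob (R : realType) (F : finFieldType) (Y : finType)
  (W : F -> Y -> R) (y : Y) : R :=
  (qF R F)^-1 * \sum_(x : F) W x y.

(* APP vector: pi_y(a) = prob(X = a | Y = y) = W(y|a) / sum_x W(y|x)
   (only relevant when prob(Y = y) > 0; it is weighted by prob(Y=y)). *)
Definition app (R : realType) (F : finFieldType) (Y : finType)
  (W : F -> Y -> R) (y : Y) (a : F) : R :=
  W a y / \sum_(x : F) W x y.

Definition C_KV (R : realType) (F : finFieldType) (Y : finType)
  (W : F -> Y -> R) : R :=
  \sum_(y : Y) out_prob W y * \sum_(a : F) (app W y a) ^+ 2.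

Definition bhatt (R : realType) (F : finFieldType) (Y : finType)
  (W : F -> Y -> R) : R :=
  (qF R F * (qF R F - 1))^-1 *
  \sum_(x : F) \sum_(x' : F | x' != x) \sum_(y : Y) Num.sqrt (W x y * W x' y).

From HB Require Import structures.
From mathcomp Require Import all_boot all_order all_algebra all_field.
From mathcomp Require Import reals.
Import Order.TTheory GRing.Theory Num.Theory.
Local Open Scope ring_scope.
Set Implicit Arguments. Unset Strict Implicit.
Set Warnings "-notation-overridden -ambiguous-paths".
From mathcomp Require Import ring.

(* The bound holds output by output, for every channel.  Fix an output y and let w = W(y|.), S = sum_x w x.  Then
   S * sum_a (w a / S)^2 = sum_a (w a)^2 / S, and
   S^2 - sum_a (w a)^2 = sum_(x <> x') w x w x' <= S * sum_(x <> x') sqrt (w x w x'),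
   because sqrt (w x w x') <= S.  Dividing by S and averaging over y with the
   weights 1/q turns this into 1 - (q - 1) Z(W) <= C_KV(W). *)

Section OneOutput.

Variables (R : rcfType) (I : finType) (w : I -> R).
Hypothesis w_ge0 : forall i, 0 <= w i.

Let S := \sum_i w i.

Lemma term_le_sum i : w i <= S.
Proof. by rewrite /S (bigD1 i) //= lerDl sumr_ge0. Qed.

Lemma sqr_sum_diag_offdiag :
  S ^+ 2 = \sum_i w i ^+ 2 + \sum_i \sum_(j | j != i) w i * w j.
Proof.
rewrite expr2 {1}/S mulr_suml -big_split /=; apply: eq_bigr => i _.
by rewrite /S mulr_sumr (bigD1 i) //= expr2.
Qed.

Lemma mul_le_sqrt_mul_sum i j : w i * w j <= S * Num.sqrt (w i * w j).
Proof.
have wij_ge0 : 0 <= w i * w j by rewrite mulr_ge0.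
rewrite -{1}(sqr_sqrtr wij_ge0) expr2 ler_wpM2r ?sqrtr_ge0 //.
have S_ge0 : 0 <= S by rewrite sumr_ge0.
rewrite -(ger0_norm S_ge0) -sqrtr_sqr expr2 ler_sqrt ?mulr_ge0 //.
by rewrite ler_pM ?term_le_sum.
Qed.

Lemma sum_sub_cross_sqrt_le :
  S - \sum_i \sum_(j | j != i) Num.sqrt (w i * w j)
    <= S * \sum_a (w a / S) ^+ 2.
Proof.
have [S0 | S_neq0] := eqVneq S 0.
  rewrite S0 mul0r sub0r oppr_le0.
  by apply: sumr_ge0 => i _; apply: sumr_ge0 => j _; exact: sqrtr_ge0.
have S_gt0 : 0 < S by rewrite lt_def S_neq0 sumr_ge0.
have -> : S * \sum_a (w a / S) ^+ 2 = (\sum_a w a ^+ 2) / S.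
  by rewrite mulr_sumr mulr_suml; apply: eq_bigr => a _; field.
rewrite ler_pdivlMr // mulrBl -expr2 sqr_sum_diag_offdiag -addrA gerDl subr_le0.
rewrite mulr_suml; apply: ler_sum => i _.
rewrite mulr_suml; apply: ler_sum => j _.
by rewrite [_ * S]mulrC mul_le_sqrt_mul_sum.
Qed.

End OneOutput.

Section Channel.

Variables (R : realType) (F : finFieldType) (Y : finType) (W : F -> Y -> R).

Lemma qF_neq0 : qF R F != 0.
Proof. by rewrite /qF pnatr_eq0 gtn_eqF // ltnW // card_finNzRing_gt1. Qed.

Lemma qF_sub1_neq0 : qF R F - 1 != 0.
Proof. by rewrite /qF subr_eq0 pnatr_eq1 gtn_eqF ?card_finNzRing_gt1. Qed.

Lemma mul_bhatt :
  (qF R F - 1) * bhatt W =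
  (qF R F)^-1 * \sum_y \sum_x \sum_(x' | x' != x) Num.sqrt (W x y * W x' y).
Proof.
have -> : \sum_y \sum_x \sum_(x' | x' != x) Num.sqrt (W x y * W x' y) =
          \sum_x \sum_(x' | x' != x) \sum_y Num.sqrt (W x y * W x' y).
  by rewrite exchange_big; apply: eq_bigr => x _; rewrite exchange_big.
by rewrite /bhatt; field; rewrite qF_neq0 qF_sub1_neq0.
Qed.

Lemma sum_out_prob : (forall x, \sum_y W x y = 1) -> \sum_y out_prob W y = 1.
Proof.
move=> W1; rewrite /out_prob -mulr_sumr exchange_big /=.
rewrite (eq_bigr (fun _ => 1)) // sumr_const -mulr_natr mul1r.
by rewrite mulVf ?qF_neq0.
Qed.

End Channel.

Theorem proposition4 (R : realType) (F : finFieldType) (Y : finType)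
  (W : F -> Y -> R) :
  is_channel W -> weakly_symmetric W ->
  1 - (qF R F - 1) * bhatt W <= C_KV W.
Proof.
move=> [W_ge0 W1] _.
rewrite mul_bhatt -(sum_out_prob W1) /C_KV /out_prob.
rewrite -mulr_sumr -mulrBr -sumrB mulr_sumr; apply: ler_sum => y _.
rewrite -mulrA ler_wpM2l ?invr_ge0 ?ler0n //.
exact: (sum_sub_cross_sqrt_le (fun x => W_ge0 x y)).
Qed.
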